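(* Let $n,k,d$ be positive integers with $k\le d<n$, let $\alpha>0$, and for each integer $M\ge 0$ set $n_M=n+M$, $k_M=k+M$, $d_M=d+M$. Let $g_M:[1,k_M]\to\mathbb{R}$ be the piecewise linear function with $g_M(i)=\frac{n_M i\alpha}{n-k+i}$ at the integers $i=1,\dots,k_M$, linear between consecutive integers. Let $s\in(0,1]$ be fixed and put $i_M=1+s(k_M-1)$. Then $$ \lim_{M\to\infty}\frac{g_M(i_M)}{C_{k_M,d_M}\!\left(\alpha,\frac{(d_M-k_M+i_M)\alpha}{d_M-k_M+1}\right)}=1, $$ where for positive integers $k\le d$ and $\alpha,\gamma>0$, $$ C_{k,d}(\alpha,\gamma)=\sum_{j=0}^{k-1}\min\left\{\alpha,\frac{d-j}{d}\gamma\right\}. $$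
   Context: $C_{k,d}(\alpha,\gamma)$ as defined in the claim is the known capacity of functional-repair regenerating codes with reconstruction degree $k$, repair degree $d$, node size $\alpha$ and total repair bandwidth $\gamma$; for this statement only the explicit formula matters. *)

From Stdlib Require Import Reals Lra.
From Coquelicot Require Import Coquelicot.
Open Scope R_scope.

Fixpoint sumR (f : nat -> R) (m : nat) : R :=
  match m with
  | O => 0
  | S m' => sumR f m' + f m'
  end.

Definition Ccap (k d : nat) (alpha gamma : R) : R :=
  sumR (fun j => Rmin alpha ((INR d - INR j) / INR d * gamma)) k.

Definition gval (n k M : nat) (alpha : R) (i : nat) : R :=
  (INR (n + M) * INR i * alpha) / (INR n - INR k + INR i).

Definition is_pl_interp (h : nat -> R) (kM : nat) (g : R -> R) : Prop :=
  g (INR kM) = h kM /\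
  forall i : nat, (1 <= i)%nat -> (i < kM)%nat ->
  forall t : R, 0 <= t <= 1 ->
    g (INR i + t) = (1 - t) * h i + t * h (S i).

(* Both sides grow like alpha * M.  The numerator: g_M interpolates
   i |-> n_M alpha i / (n - k + i), which equals n_M alpha (1 - O(1/M))
   for every i >= i_M - 1 ~ s M.  The denominator: every summand of
   C_{k_M,d_M} is at most alpha, and it equals alpha as soon as
   j <= d_M - (d - k + 1) / s, so C = alpha (k_M - O(1)).  Hence the
   ratio is squeezed between (1 + a / (M + b)) (1 + a' / (M + b')) and
   1 + a'' / (M + b''), both tending to 1. *)
From Stdlib Require Import Reals Lra Lia.
From Coquelicot Require Import Coquelicot.
Open Scope R_scope.

Lemma is_lim_seq_one_plus_div (a b : R) :
  is_lim_seq (fun M => 1 + a / (INR M + b)) 1.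
Proof.
  assert (Hinf : is_lim_seq (fun M => INR M + b) p_infty).
  { eapply is_lim_seq_plus; [apply is_lim_seq_INR | apply is_lim_seq_const |].
    constructor. }
  pose proof (is_lim_seq_scal_l _ a _ (is_lim_seq_inv _ _ Hinf ltac:(discriminate))) as H0.
  simpl in H0; rewrite Rmult_0_r in H0.
  pose proof (is_lim_seq_plus' _ _ 1 0 (is_lim_seq_const 1) H0) as H.
  rewrite Rplus_0_r in H; exact H.
Qed.

Lemma exists_INR_floor (K : nat) (x : R) :
  1 <= x -> x < INR K ->
  exists i, (1 <= i < K)%nat /\ INR i <= x < INR i + 1.
Proof.
  induction K as [|K IH]; intros H1 H2.
  - simpl in H2; lra.
  - rewrite S_INR in H2.
    destruct (Rlt_dec x (INR K)) as [Hlt|Hge].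
    + destruct (IH H1 Hlt) as [i [Hi Hix]]; exists i; split; [lia | lra].
    + exists K; destruct K as [|K]; [simpl in *; lra |].
      split; [lia | lra].
Qed.

Lemma sumR_le_const (f : nat -> R) (a : R) (m : nat) :
  (forall j, (j < m)%nat -> f j <= a) -> sumR f m <= a * INR m.
Proof.
  induction m as [|m IH]; intros Hf; cbn [sumR].
  - simpl; lra.
  - rewrite S_INR.
    pose proof (IH (fun j Hj => Hf j ltac:(lia))).
    pose proof (Hf m ltac:(lia)).
    lra.
Qed.

Lemma sumR_ge_prefix (f : nat -> R) (a T : R) (m : nat) :
  0 <= a -> (forall j, (j < m)%nat -> 0 <= f j) ->
  (forall j, (j < m)%nat -> INR j <= T -> a <= f j) ->
  a * Rmin (INR m) T <= sumR f m.
Proof.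
  induction m as [|m IH]; intros Ha Hpos Hprefix; cbn [sumR].
  - simpl; pose proof (Rmin_l 0 T); nra.
  - pose proof (IH Ha (fun j Hj => Hpos j ltac:(lia))
                  (fun j Hj => Hprefix j ltac:(lia))) as IHm.
    rewrite S_INR.
    destruct (Rle_dec (INR m) T) as [HmT|HmT].
    + pose proof (Hprefix m ltac:(lia) HmT).
      assert (a * Rmin (INR m + 1) T <= a * (Rmin (INR m) T + 1)).
      { apply Rmult_le_compat_l; [lra |].
        unfold Rmin; repeat destruct Rle_dec; lra. }
      lra.
    + pose proof (Hpos m ltac:(lia)).
      replace (Rmin (INR m + 1) T) with (Rmin (INR m) T)
        by (unfold Rmin; repeat destruct Rle_dec; lra).
      lra.
Qed.

Lemma div_shift_bounds (c q x : R) :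
  0 < c -> 0 < q <= x -> 1 - c / q <= x / (c + x) <= 1.
Proof.
  intros Hc Hq.
  replace (x / (c + x)) with (1 - c / (c + x)) by (field; lra).
  assert (0 < c / (c + x)) by (apply Rdiv_lt_0_compat; lra).
  assert (c / (c + x) <= c / q).
  { apply Rmult_le_compat_l; [lra |]. apply Rinv_le_contravar; lra. }
  lra.
Qed.

Lemma gval_bounds (n k M : nat) (alpha q : R) (i : nat) :
  (k < n)%nat -> 0 < alpha -> 0 < q <= INR i ->
  INR (n + M) * alpha * (1 - (INR n - INR k) / q)
    <= gval n k M alpha i <= INR (n + M) * alpha.
Proof.
  intros Hkn Ha Hq.
  assert (Hc : 0 < INR n - INR k) by (pose proof (lt_INR _ _ Hkn); lra).
  assert (0 <= INR (n + M) * alpha) by (apply Rmult_le_pos; [apply pos_INR | lra]).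
  destruct (div_shift_bounds _ _ _ Hc Hq) as [Hlo Hhi].
  replace (gval n k M alpha i)
    with (INR (n + M) * alpha * (INR i / (INR n - INR k + INR i)))
    by (unfold gval; field; lra).
  split.
  - apply Rmult_le_compat_l; lra.
  - rewrite <- (Rmult_1_r (INR (n + M) * alpha)) at 2.
    apply Rmult_le_compat_l; lra.
Qed.

Lemma is_pl_interp_bounds (h : nat -> R) (kM : nat) (g : R -> R) (x lo hi : R) :
  is_pl_interp h kM g -> 1 <= x <= INR kM ->
  (forall i, (1 <= i <= kM)%nat -> x - 1 <= INR i -> lo <= h i <= hi) ->
  lo <= g x <= hi.
Proof.
  intros [Hend Hlin] Hx Hh.
  destruct (Rle_lt_or_eq_dec _ _ (proj2 Hx)) as [Hlt|Heq].
  - destruct (exists_INR_floor kM x (proj1 Hx) Hlt) as [i [Hi Hix]].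
    replace x with (INR i + (x - INR i)) by ring.
    rewrite (Hlin i ltac:(lia) ltac:(lia) (x - INR i) ltac:(lra)).
    pose proof (Hh i ltac:(lia) ltac:(lra)).
    pose proof (Hh (S i) ltac:(lia) ltac:(rewrite S_INR; lra)).
    nra.
  - rewrite Heq, Hend; apply Hh; [| lra].
    assert (1 <= kM)%nat by (apply INR_le; simpl; lra).
    lia.
Qed.

Lemma Ccap_le (k d : nat) (alpha gamma : R) : Ccap k d alpha gamma <= alpha * INR k.
Proof. apply sumR_le_const; intros j _; apply Rmin_l. Qed.

(* With gamma = (d - k + x) alpha / (d - k + 1) and x = 1 + s (k - 1), the
   summand min {alpha, (d - j) gamma / d} saturates at alpha for every
   j <= d - (d - k + 1) / s, because s d <= d - k + x. *)
Lemma Ccap_interp_ge (k d : nat) (alpha s : R) :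
  (0 < k)%nat -> (k <= d)%nat -> 0 < alpha -> 0 < s <= 1 ->
  let x := 1 + s * (INR k - 1) in
  alpha * (INR k - (INR d - INR k + 1) / s)
    <= Ccap k d alpha ((INR d - INR k + x) * alpha / (INR d - INR k + 1)).
Proof.
  intros Hk Hkd Ha Hs x.
  set (e := INR d - INR k); set (B := (e + 1) / s).
  set (gamma := (e + x) * alpha / (e + 1)).
  assert (Hk1 : 1 <= INR k) by (apply (le_INR 1); exact Hk).
  assert (He : 0 <= e) by (pose proof (le_INR _ _ Hkd); unfold e; lra).
  assert (HD : INR d = INR k + e) by (unfold e; ring).
  assert (Hx : 1 <= x <= INR k) by (unfold x; nra).
  assert (Hgamma : 0 < gamma) by (apply Rdiv_lt_0_compat; nra).
  assert (HB : 0 < B) by (apply Rdiv_lt_0_compat; lra).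
  apply Rle_trans with (alpha * Rmin (INR k) (INR d - B)).
  { apply Rmult_le_compat_l; [lra |].
    unfold Rmin; destruct Rle_dec; lra. }
  apply sumR_ge_prefix; [lra | |].
  - intros j Hj; apply lt_INR in Hj.
    apply Rmin_glb; [lra |].
    apply Rmult_le_pos; [apply Rdiv_le_0_compat |]; lra.
  - intros j Hj HjB; apply lt_INR in Hj.
    assert (Hjs : e + 1 <= (INR d - INR j) * s).
    { apply Rmult_le_reg_r with (/ s); [apply Rinv_0_lt_compat; lra |].
      rewrite Rmult_assoc, Rinv_r by lra.
      unfold B, Rdiv in HjB; lra. }
    assert (Hsd : s * INR d <= e + x) by (unfold x; nra).
    assert (Hratio : 1 <= (INR d - INR j) * (e + x) / ((e + 1) * INR d)).
    { apply Rmult_le_reg_r with ((e + 1) * INR d); [nra |].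
      unfold Rdiv; rewrite Rmult_assoc, Rinv_l by nra; nra. }
    replace ((INR d - INR j) / INR d * gamma)
      with (alpha * ((INR d - INR j) * (e + x) / ((e + 1) * INR d)))
      by (unfold gamma; field; lra).
    unfold Rmin; destruct Rle_dec; nra.
Qed.

Lemma Rdiv_squeeze (glo g ghi Clo C Chi : R) :
  0 <= glo <= g -> g <= ghi -> 0 < Clo <= C -> C <= Chi ->
  glo / Chi <= g / C <= ghi / Clo.
Proof.
  intros Hg Hghi HC HChi; unfold Rdiv.
  split; apply Rmult_le_compat; try lra;
    solve [apply Rlt_le, Rinv_0_lt_compat; lra | apply Rinv_le_contravar; lra].
Qed.

Section Asymptotics.

Variables (n k d : nat) (alpha s : R).
Hypotheses (Hk : (0 < k)%nat) (Hkd : (k <= d)%nat) (Hdn : (d < n)%nat)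
  (Ha : 0 < alpha) (Hs : 0 < s <= 1).

Local Notation c := (INR n - INR k).
Local Notation B := ((INR d - INR k + 1) / s).
Local Notation iM M := (1 + s * (INR (k + M) - 1)).

Lemma c_pos : 0 < c.
Proof. pose proof (lt_INR k n ltac:(lia)); lra. Qed.

Lemma B_pos : 0 < B.
Proof. pose proof (le_INR _ _ Hkd); apply Rdiv_lt_0_compat; lra. Qed.

Lemma numerator_bounds (M : nat) (gM : R -> R) :
  is_pl_interp (gval n k M alpha) (k + M) gM -> c < iM M - 1 ->
  INR (n + M) * alpha * (1 - c / (iM M - 1)) <= gM (iM M) <= INR (n + M) * alpha.
Proof.
  intros Hg Hq.
  assert (HK : 1 <= INR (k + M)) by (apply (le_INR 1); lia).
  apply (is_pl_interp_bounds (gval n k M alpha) (k + M)); [exact Hg | nra |].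
  intros i Hi Hxi; apply gval_bounds; [lia | lra | pose proof c_pos; lra].
Qed.

Lemma denominator_bounds (M : nat) :
  let gamma := (INR (d + M) - INR (k + M) + iM M) * alpha
                 / (INR (d + M) - INR (k + M) + 1) in
  alpha * (INR (k + M) - B) <= Ccap (k + M) (d + M) alpha gamma
    <= alpha * INR (k + M).
Proof.
  intros gamma; split; [| apply Ccap_le].
  replace (INR d - INR k) with (INR (d + M) - INR (k + M))
    by (rewrite !plus_INR; ring).
  apply Ccap_interp_ge; [lia | lia | exact Ha | exact Hs].
Qed.

Lemma ratio_bounds (M : nat) (gM : R -> R) :
  is_pl_interp (gval n k M alpha) (k + M) gM -> B + c / s + 1 < INR M ->
  let gamma := (INR (d + M) - INR (k + M) + iM M) * alpha
                 / (INR (d + M) - INR (k + M) + 1) in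
  (1 + c / (INR M + INR k)) * (1 + - (c / s) / (INR M + (INR k - 1)))
    <= gM (iM M) / Ccap (k + M) (d + M) alpha gamma
    <= 1 + (c + B) / (INR M + (INR k - B)).
Proof.
  intros Hg HM gamma.
  pose proof c_pos as Hc; pose proof B_pos as HB; pose proof (pos_INR M).
  assert (Hk1 : 1 <= INR k) by (apply (le_INR 1); lia).
  assert (HK : INR (k + M) = INR k + INR M) by apply plus_INR.
  assert (HN : INR (n + M) = c + INR k + INR M) by (rewrite plus_INR; ring).
  assert (Hq : c < s * (INR k + INR M - 1)).
  { assert (c / s * s = c) by (field; lra). nra. }
  assert (Hlo : 0 <= 1 - c / (iM M - 1)).
  { rewrite HK; replace (1 + _ - 1) with (s * (INR k + INR M - 1)) by ring.
    assert (c / (s * (INR k + INR M - 1)) <= 1)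
      by (apply Rmult_le_reg_r with (s * (INR k + INR M - 1)); [lra |];
          unfold Rdiv; rewrite Rmult_assoc, Rinv_l; lra).
    lra. }
  assert (HKB : 0 < INR (k + M) - B)
    by (pose proof (Rdiv_lt_0_compat c s Hc ltac:(lra)); lra).
  destruct (numerator_bounds M gM Hg ltac:(rewrite HK; lra)) as [Hnum_lo Hnum_hi].
  destruct (denominator_bounds M) as [Hden_lo Hden_hi]; fold gamma in Hden_lo, Hden_hi.
  destruct (Rdiv_squeeze _ (gM (iM M)) _ _ (Ccap (k + M) (d + M) alpha gamma) _
              (conj (Rmult_le_pos _ _ (Rmult_le_pos _ _ (pos_INR _) (Rlt_le _ _ Ha)) Hlo)
                    Hnum_lo) Hnum_hi
              (conj (Rmult_lt_0_compat _ _ Ha HKB) Hden_lo) Hden_hi) as [Hl Hu].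
  split.
  - eapply Rle_trans; [right | exact Hl].
    rewrite HN, HK; field; repeat split; nra.
  - eapply Rle_trans; [exact Hu | right].
    rewrite HN, HK; field.
    assert (B * s = INR d - INR k + 1) by (field; lra).
    rewrite HK in HKB; repeat split; nra.
Qed.

End Asymptotics.

Theorem theorem5p1 (n k d : nat) (alpha s : R) (g : nat -> R -> R) :
  (0 < k)%nat -> (k <= d)%nat -> (d < n)%nat ->
  0 < alpha -> 0 < s <= 1 ->
  (forall M : nat, is_pl_interp (gval n k M alpha) (k + M) (g M)) ->
  is_lim_seq
    (fun M : nat =>
       let iM := 1 + s * (INR (k + M) - 1) in
       g M iM /
       Ccap (k + M) (d + M) alpha
         ((INR (d + M) - INR (k + M) + iM) * alpha
            / (INR (d + M) - INR (k + M) + 1)))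
    1.
Proof.
  intros Hk Hkd Hdn Ha Hs Hg.
  set (c := INR n - INR k); set (B := (INR d - INR k + 1) / s).
  apply is_lim_seq_le_le_loc with
    (u := fun M => (1 + c / (INR M + INR k)) * (1 + - (c / s) / (INR M + (INR k - 1))))
    (w := fun M => 1 + (c + B) / (INR M + (INR k - B))).
  - destruct (proj2 (is_lim_seq_spec _ _) is_lim_seq_INR (B + c / s + 1)) as [M0 HM0].
    exists M0; intros M HM.
    exact (ratio_bounds n k d alpha s Hk Hkd Hdn Ha Hs M (g M) (Hg M) (HM0 M HM)).
  - replace (Finite 1) with (Finite (1 * 1)) by (f_equal; ring).
    apply is_lim_seq_mult'; apply is_lim_seq_one_plus_div.
  - apply is_lim_seq_one_plus_div.
Qed.
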